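(* Let $n = |\mathcal S||\mathcal A|$ and let $w=(w_1,\dots,w_n)$ be weights with $w_i>0$ for all $i$ and $\sum_{i=1}^n w_i = 1$. For any $p\in(1,\infty)$ and any $Q,Q'\in\mathbb{R}^{n}$, \[ \|F_\lambda Q - F_\lambda Q'\|_{p,w} \le \gamma_{p,w}\,\|Q-Q'\|_{p,w},\qquad \text{where } \gamma_{p,w} := \gamma\, n^{1/p}\left(\frac{w_{\max}}{w_{\min}}\right)^{1/p}. \]
   Context: Consider a finite discounted MDP with state space $\mathcal S=\{1,\dots,|\mathcal S|\}$, action space $\mathcal A=\{1,\dots,|\mathcal A|\}$, transition probabilities $P(s'\mid s,a)$, expected one-step reward $R(s,a)$, and discount factor $\gamma\in[0,1)$. Q-functions are identified with vectors in $\mathbb{R}^n$, $n=|\mathcal S||\mathcal A|$, indexed by pairs $(s,a)$. For a temperature $\lambda>0$, the soft Bellman operator is \[(F_\lambda Q)(s,a) := R(s,a)+\gamma\sum_{s'\in\mathcal S}P(s'\mid s,a)\,\lambda\ln\Big(\sum_{u\in\mathcal A}\exp\big(Q(s',u)/\lambda\big)\Big).\] For $x\in\mathbb{R}^n$, the weighted norm is $\|x\|_{p,w}=\big(\sum_{i=1}^n w_i|x_i|^p\big)^{1/p}$, and $w_{\min}=\min_i w_i$, $w_{\max}=\max_i w_i$. *)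

From mathcomp Require Import all_boot all_order all_algebra.
From mathcomp Require Import reals sequences exp.
Set Implicit Arguments. Unset Strict Implicit. Unset Printing Implicit Defensive.
Import Order.TTheory GRing.Theory Num.Theory.
Local Open Scope ring_scope.

Definition SA (nS nA : nat) := ('I_nS * 'I_nA)%type.

(* Soft Bellman operator F_lambda. P s a s' = P(s'|s,a), Rw s a = R(s,a). *)
Definition softBellman (R : realType) (nS nA : nat)
  (P : 'I_nS -> 'I_nA -> 'I_nS -> R) (Rw : 'I_nS -> 'I_nA -> R)
  (gamma lam : R) (Q : SA nS nA -> R) : SA nS nA -> R :=
  fun sa => Rw sa.1 sa.2 + gamma * \sum_(s' < nS) P sa.1 sa.2 s' *
     (lam * ln (\sum_(u < nA) expR (Q (s', u) / lam))).

Definition wpnorm (R : realType) (T : finType) (p : R) (w x : T -> R) : R :=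
  (\sum_i w i * (`|x i| `^ p)) `^ (p^-1).

(* w_max for a nonnegative family (identity 0), and w_min (identity w_max,
   so that it is the true minimum on a nonempty index type). *)
Definition wmax (R : realType) (T : finType) (w : T -> R) : R :=
  \big[Num.max/0]_i w i.
Definition wmin (R : realType) (T : finType) (w : T -> R) : R :=
  \big[Num.min/wmax w]_i w i.

From mathcomp Require Import all_boot all_order all_algebra.
From mathcomp Require Import reals sequences exp.
From mathcomp Require Import lra.
Import Order.TTheory GRing.Theory Num.Theory.
Local Open Scope ring_scope.

(* Log-sum-exp is monotone and commutes with adding a constant, hence it is
   1-Lipschitz for the sup norm; averaging over [P] and scaling by [gamma]
   makes [F_lambda] a [gamma]-contraction for the sup norm.  The weighted
   p-norm and the sup norm compare as
   [w_min^(1/p) |x|_oo <= |x|_(p,w) <= |x|_oo] (the latter since the weights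
   sum to 1), and [1 <= n w_max] absorbs the remaining factor. *)

Lemma powR_ge1 (R : realType) (a r : R) : 0 <= r -> 1 <= a -> 1 <= a `^ r.
Proof.
move=> r_ge0 a_ge1; have := ge0_ler_powR r_ge0 _ _ a_ge1.
by rewrite powR1; apply; rewrite nnegrE ?ler01 ?(le_trans ler01 a_ge1).
Qed.

Section WeightedNorm.
Context {R : realType} {T : finType} {p : R} {w : T -> R}.
Hypotheses (p_gt0 : 0 < p) (w_ge0 : forall i, 0 <= w i).
Let pV_ge0 : 0 <= p^-1. Proof. by rewrite invr_ge0 ltW. Qed.

Lemma powRK (x : R) : 0 <= x -> (x `^ p) `^ p^-1 = x.
Proof. by move=> x0; rewrite -powRrM divff ?gt_eqF // powRr1. Qed.

Lemma wmin_le i : wmin w <= w i.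
Proof. exact: bigmin_le. Qed.

Lemma le_wmax i : w i <= wmax w.
Proof. exact: le_bigmax. Qed.

Lemma wmin_gt0 (i0 : T) : (forall i, 0 < w i) -> 0 < wmin w.
Proof.
move=> w_gt0; have wmax_gt0 : 0 < wmax w := lt_le_trans (w_gt0 i0) (le_wmax i0).
by apply: (big_ind (fun x => 0 < x)) => // x y x0 y0; rewrite lt_min x0 y0.
Qed.

Lemma card_wmax_ge1 : \sum_i w i = 1 -> 1 <= #|T|%:R * wmax w.
Proof.
move=> w1; rewrite -[leLHS]w1 mulr_natl -sumr_const.
by apply: ler_sum => i _; exact: le_wmax.
Qed.

Lemma normr_le_wpnorm (x : T -> R) j :
  0 < w j -> `|x j| <= (w j)^-1 `^ p^-1 * wpnorm p w x.
Proof.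
move=> wj_gt0; have S_ge0 : 0 <= \sum_i w i * `|x i| `^ p.
  by apply: sumr_ge0 => i _; rewrite mulr_ge0 ?powR_ge0.
have wjV_ge0 : 0 <= (w j)^-1 by rewrite invr_ge0 ltW.
rewrite /wpnorm -powRM // -{1}(powRK _ (normr_ge0 (x j))).
apply: ge0_ler_powR; rewrite ?nnegrE ?powR_ge0 ?mulr_ge0 //.
rewrite ler_pdivlMl // (bigD1 j) //= lerDl.
by apply: sumr_ge0 => i _; rewrite mulr_ge0 ?powR_ge0.
Qed.

Lemma wpnorm_le (x : T -> R) (M : R) : \sum_i w i = 1 -> 0 <= M ->
  (forall i, `|x i| <= M) -> wpnorm p w x <= M.
Proof.
move=> w1 M0 xM; rewrite /wpnorm -{1}(powRK _ M0).
apply: ge0_ler_powR; rewrite ?nnegrE ?powR_ge0 //.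
  by apply: sumr_ge0 => i _; rewrite mulr_ge0 ?powR_ge0.
rewrite -[leRHS]mul1r -w1 mulr_suml; apply: ler_sum => i _.
rewrite ler_wpM2l // ge0_ler_powR ?(ltW p_gt0) // nnegrE //; exact: le_trans (xM i).
Qed.

End WeightedNorm.

Section LogSumExp.
Context {R : realType} {T : finType} (u0 : T) (lam : R).
Hypothesis lam_gt0 : 0 < lam.

Lemma sum_expR_gt0 (g : T -> R) : 0 < \sum_u expR (g u).
Proof.
rewrite (bigD1 u0) //= ltr_wpDr ?expR_gt0 //.
by apply: sumr_ge0 => u _; exact: expR_ge0.
Qed.

Definition lse (f : T -> R) : R := lam * ln (\sum_u expR (f u / lam)).

Let sum_expR_pos (f : T -> R) : \sum_u expR (f u / lam) \in Num.pos.
Proof. by rewrite posrE sum_expR_gt0. Qed.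

Lemma ler_lse (f g : T -> R) : (forall u, f u <= g u) -> lse f <= lse g.
Proof.
move=> fg; rewrite /lse ler_wpM2l ?(ltW lam_gt0) //.
rewrite (ler_ln (sum_expR_pos f) (sum_expR_pos g)).
by apply: ler_sum => u _; rewrite ler_expR ler_pM2r ?invr_gt0.
Qed.

Lemma lse_addc (f : T -> R) (c : R) : lse (fun u => f u + c) = lse f + c.
Proof.
have expRDc u : expR ((f u + c) / lam) = expR (f u / lam) * expR (c / lam).
  by rewrite -expRD mulrDl.
rewrite /lse (eq_bigr _ (fun u _ => expRDc u)) -mulr_suml.
rewrite (lnM (sum_expR_pos f)) ?posrE ?expR_gt0 // expRK.
by rewrite mulrDr mulrCA divff ?gt_eqF // mulr1.
Qed.

Lemma lse_lipschitz (f g : T -> R) (M : R) :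
  (forall u, `|f u - g u| <= M) -> `|lse f - lse g| <= M.
Proof.
move=> fgM; have shift_le h k : (forall u, `|h u - k u| <= M) -> lse h <= lse k + M.
  move=> hkM; rewrite -lse_addc; apply: ler_lse => u.
  by have := hkM u; rewrite ler_norml => /andP[_]; lra.
have gfM u : `|g u - f u| <= M by rewrite distrC.
have := shift_le _ _ fgM; have := shift_le _ _ gfM.
by rewrite ler_norml; move=> ? ?; apply/andP; split; lra.
Qed.

End LogSumExp.

Section SoftBellman.
Context {R : realType} {nS nA : nat}.
Context {P : 'I_nS -> 'I_nA -> 'I_nS -> R} {Rw : 'I_nS -> 'I_nA -> R} {gamma lam : R}.
Hypotheses (P_ge0 : forall s a s', 0 <= P s a s')
  (P_sum1 : forall s a, \sum_(s' < nS) P s a s' = 1)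
  (gamma_ge0 : 0 <= gamma) (lam_gt0 : 0 < lam).

Lemma softBellmanE Q sa : softBellman P Rw gamma lam Q sa =
  Rw sa.1 sa.2 + gamma * \sum_(s' < nS) P sa.1 sa.2 s' * lse lam (fun u => Q (s', u)).
Proof. by []. Qed.

Lemma softBellman_contraction (a0 : 'I_nA) (Q Q' : SA nS nA -> R) (M : R) :
  (forall i, `|Q i - Q' i| <= M) ->
  forall sa, `|softBellman P Rw gamma lam Q sa - softBellman P Rw gamma lam Q' sa|
             <= gamma * M.
Proof.
move=> QM [s a]; rewrite !softBellmanE /= opprD addrACA subrr add0r.
rewrite -mulrBr -sumrB normrM ger0_norm // ler_wpM2l //.
rewrite (le_trans (ler_norm_sum _ _ _)) // -[leRHS]mul1r -(P_sum1 s a) mulr_suml.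
apply: ler_sum => s' _; rewrite -mulrBr normrM ger0_norm // ler_wpM2l //.
by apply: (lse_lipschitz a0 _ lam_gt0) => u; exact: QM.
Qed.

End SoftBellman.

Theorem proposition1 (R : realType) (nS nA : nat)
  (P : 'I_nS -> 'I_nA -> 'I_nS -> R) (Rw : 'I_nS -> 'I_nA -> R)
  (gamma lam : R) (w : SA nS nA -> R) (p : R) (Q Q' : SA nS nA -> R) :
  (forall s a s', 0 <= P s a s') ->
  (forall s a, \sum_(s' < nS) P s a s' = 1) ->
  0 <= gamma -> gamma < 1 -> 0 < lam ->
  (forall i, 0 < w i) -> \sum_i w i = 1 ->
  1 < p ->
  wpnorm p w (fun i => softBellman P Rw gamma lam Q i - softBellman P Rw gamma lam Q' i)
  <= gamma * ((nS * nA)%:R `^ (p^-1)) * ((wmax w / wmin w) `^ (p^-1))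
     * wpnorm p w (fun i => Q i - Q' i).
Proof.
move=> P_ge0 P_sum1 gamma_ge0 _ lam_gt0 w_gt0 w_sum1 p_gt1.
have p_gt0 : 0 < p := lt_trans ltr01 p_gt1.
have pV_ge0 : 0 <= p^-1 by rewrite invr_ge0 ltW.
have w_ge0 i : 0 <= w i := ltW (w_gt0 i).
have [i0 _] : exists i0 : SA nS nA, true.
  case: (pickP (@predT (SA nS nA))) => [i0 _ | none]; first by exists i0.
  by move: w_sum1; rewrite big_pred0 // => /eqP; rewrite eq_sym oner_eq0.
have w_min_gt0 : 0 < wmin w := wmin_gt0 i0 w_gt0.
have w_min_ge0 := ltW w_min_gt0.
have wmax_ge0 : 0 <= wmax w := le_trans (w_ge0 i0) (le_wmax i0).
set N := wpnorm p w (fun i => Q i - Q' i).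
set M := (wmin w)^-1 `^ p^-1 * N.
have M_ge0 : 0 <= M by rewrite mulr_ge0 ?powR_ge0.
have QM i : `|Q i - Q' i| <= M.
  apply: (le_trans (normr_le_wpnorm p_gt0 w_ge0 (fun i => Q i - Q' i) _ (w_gt0 i))).
  rewrite ler_wpM2r ?powR_ge0 // ge0_ler_powR // ?nnegrE ?invr_ge0 //.
  by rewrite lef_pV2 ?posrE // wmin_le.
have nwmax_ge1 : 1 <= (nS * nA)%:R * wmax w.
  by have := card_wmax_ge1 w_sum1; rewrite card_prod !card_ord.
have FQM :=
  softBellman_contraction (Rw := Rw) P_ge0 P_sum1 gamma_ge0 lam_gt0 i0.2 _ _ _ QM.
apply: (le_trans (wpnorm_le p_gt0 w_ge0 _ _ w_sum1 (mulr_ge0 gamma_ge0 M_ge0) FQM)).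
rewrite -!mulrA ler_wpM2l // mulrA -powRM ?ler0n ?divr_ge0 //.
rewrite mulrA powRM ?mulr_ge0 ?ler0n ?invr_ge0 // -mulrA.
by rewrite ler_peMl ?mulr_ge0 ?powR_ge0 // powR_ge1.
Qed.
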